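(* Let $\mathbb{F}$ be a field of characteristic $2$, $D$ an oriented diagram of a link $L$, $w_c\in\mathbb{F}$ weights for the components, $(C(D),d=d_0+d_1)$ the deformed complex, and $p$ a marked point on $D$ away from the crossings. Then $dX_p=X_pd$.
   Context: For crossings $1,\dots,n$ and $I\in\{0,1\}^n$ let $I$ also denote the set of circles of the complete resolution (Khovanov $0$/$1$-smoothings). With $V=\mathbb{F}[x]/(x^2)$, $V(I)=\bigotimes_{\text{circles}}V$, identified with $\mathbb{F}[x_1,\dots,x_{p(I)}]/(x_j^2)$ with one variable per circle, and $C(D)=\bigoplus_IV(I)$. For an edge $(I,J)$ ($J$ from $I$ by changing digit $i$ from $0$ to $1$), $\mathcal{A}(I,J)$ is the saddle merge/split map ($m$, or $\Delta(1)=1\otimes x+x\otimes1$, $\Delta(x)=x\otimes x$) and $\mathcal{A}(J,I)$ is the map of the reversed saddle. $d_0=\sum_{(I,J)}\mathcal{A}(I,J)$ and $d_1=\sum_{(I,J)}s(i)(w^i_{\mathrm{over}}-w^i_{\mathrm{under}})\mathcal{A}(J,I)$ (signs are irrelevant in characteristic 2), where $w^i_{\mathrm{over/under}}$ are the weights of the over/under strands at crossing $i$. For a marked point $p$, $X_p:C(D)\to C(D)$ multiplies $y\in V(I)$ by the variable $x_p$ of the circle of $I$ through $p$. *)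

From HB Require Import structures.
From mathcomp Require Import all_boot all_order all_algebra.
Set Implicit Arguments. Unset Strict Implicit. Unset Printing Implicit Defensive.
Import GRing.Theory.
Local Open Scope ring_scope.

Section Khovanov.
Variables (E : finType) (n : nat).

(* A diagram with crossings 'I_n and edges (arcs between crossings, or
   crossingless circles) E.  Crossing i is the PD tuple
   X[xa i, xb i, xc i, xd i]: xa i is the incoming edge of the under strand,
   then the edges are listed counterclockwise; the under strand is
   xa i -> xc i, the over strand is xb i -- xd i, traversed xb -> xd when
   ovdir i is true and xd -> xb otherwise. *)
Record pd := PD {
  xa : 'I_n -> E; xb : 'I_n -> E; xc : 'I_n -> E; xd : 'I_n -> E;
  ovdir : 'I_n -> bool }.

Variable D : pd.

Definition over_in i := if ovdir D i then xb D i else xd D i.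
Definition over_out i := if ovdir D i then xd D i else xb D i.
Definition in_count (e : E) : nat :=
  (\sum_(i < n) ((xa D i == e) + (over_in i == e)))%N.
Definition out_count (e : E) : nat :=
  (\sum_(i < n) ((xc D i == e) + (over_out i == e)))%N.
(* well-formed oriented diagram: every edge enters exactly one crossing
   slot and leaves exactly one, or touches no crossing (a free circle). *)
Definition pd_wf : Prop :=
  forall e, in_count e = out_count e /\ (in_count e <= 1)%N.

Definition pair_match (x y e f : E) : bool :=
  ((e == x) && (f == y)) || ((e == y) && (f == x)).

(* components of the link: the strands go straight through each crossing *)
Definition link_rel : rel E := fun e f =>
  [exists i, pair_match (xa D i) (xc D i) e f || pair_match (xb D i) (xd D i) e f].

Definition state := {ffun 'I_n -> bool}.

Definition smooth_rel (I : state) : rel E := fun e f =>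
  [exists i, if I i
             then pair_match (xa D i) (xd D i) e f || pair_match (xb D i) (xc D i) e f
             else pair_match (xa D i) (xb D i) e f || pair_match (xc D i) (xd D i) e f].

Definition circ (I : state) (e : E) : {set E} := [set f | connect (smooth_rel I) e f].

Definition closedb (I : state) (S : {set E}) : bool :=
  [forall e, forall f, connect (smooth_rel I) e f ==> ((e \in S) == (f \in S))].

Definition closure (I : state) (S : {set E}) : {set E} :=
  [set e | [exists f in S, connect (smooth_rel I) f e]].

(* Basis of C(D): pairs (I, S), S a set of circles of I (a union of circles),
   standing for the monomial prod_{circles c in S} x_c in V(I). *)
Definition gen := {g : state * {set E} | closedb g.1 g.2}.

Definition flip (I : state) (i : 'I_n) : state :=
  [ffun j => if j == i then ~~ I i else I j].

(* representative edges of the two arcs of the smoothing of I at crossing i *)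
Definition reps (I : state) (i : 'I_n) : E * E :=
  if I i then (xa D i, xb D i) else (xa D i, xc D i).

Variable F : fieldType.

Definition C := {ffun gen -> F}.

Definition bvec (I : state) (S : {set E}) : C :=
  [ffun g : gen => ((val g == (I, S)) : nat)%:R].

Definition linext (f : state -> {set E} -> C) (v : C) : C :=
  [ffun h : gen => \sum_(g : gen) v g * f (val g).1 (val g).2 h].

(* saddle map from V(K) to V(K') for the crossing i (K' = K with digit i
   changed): merge m, or split Delta(1) = 1*x + x*1, Delta(x) = x*x.
   (The remaining "1 circle -> 1 circle" case cannot occur for a planar
   diagram; the map is then 0.) *)
Definition saddle (K K' : state) (i : 'I_n) (S : {set E}) : C :=
  let s := reps K i in let t := reps K' i in
  if ~~ connect (smooth_rel K) s.1 s.2 then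
    (if (s.1 \in S) && (s.2 \in S) then 0 else bvec K' (closure K' S))
  else if ~~ connect (smooth_rel K') t.1 t.2 then
    (if s.1 \in S then bvec K' S
     else bvec K' (S :|: circ K' t.1) + bvec K' (S :|: circ K' t.2))
  else 0.

Definition Xp (p : E) : C -> C :=
  linext (fun I S => if p \in S then 0 else bvec I (S :|: circ I p)).

Definition d0 : C -> C :=
  linext (fun I S => \sum_(i < n | ~~ I i) saddle I (flip I i) i S).

(* sgn : the signs s(i) = (-1)^(sgn i); w : weight of the component of
   each edge; over strand at i contains xb i, under strand contains xa i *)
Definition d1 (sgn : 'I_n -> bool) (w : E -> F) : C -> C :=
  linext (fun I S => \sum_(i < n | I i)
    [ffun h : gen => ((-1) ^+ sgn i) * (w (xb D i) - w (xa D i)) * saddle I (flip I i) i S h]).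

Definition dd (sgn : 'I_n -> bool) (w : E -> F) (v : C) : C :=
  d0 v + d1 sgn w v.

End Khovanov.

From Pilot Require Import Defs.
From HB Require Import structures.
From mathcomp Require Import all_boot all_order all_algebra.
From mathcomp Require Import zify.
Set Implicit Arguments. Unset Strict Implicit. Unset Printing Implicit Defensive.
Import GRing.Theory.

(* X_p commutes with each saddle map on its own, so neither the characteristic
   nor the weights nor the signs play a role.  When the two arcs of the
   smoothing at crossing i lie on different circles, changing the smoothing
   fuses these two circles and leaves every other circle intact; this rests
   on a handshake argument showing that, away from crossing i, the end xa i
   is joined to one of the other three ends.  Read backwards, a saddle that
   changes the number of circles splits one circle into two.  On monomials
   x^S the merge m and the split Delta then commute with multiplication by
   x_p, the variable of the circle through p being identified with that of
   the fused circle. *)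

Lemma connect_invariant (T : finType) (e : rel T) (P : pred T) x y :
  (forall u v, P u -> e u v -> P v) -> P x -> connect e x y -> P y.
Proof.
move=> stepP Px /connectP[s]; elim: s x Px => [|z s IHs] x Px /=; first by move=> _ ->.
by case/andP=> exz pth; apply: IHs (stepP _ _ Px exz) pth.
Qed.

Section Smoothings.
Variables (E : finType) (n : nat) (D : pd E n).
Implicit Types (K I : state n) (i j : 'I_n) (x y u v e f : E) (S : {set E}).
Local Notation sr := (smooth_rel D).

Lemma pair_match_sym x y u v : pair_match x y u v = pair_match x y v u.
Proof. by rewrite /pair_match orbC !(andbC (v == _)). Qed.

Definition smooth_at K j : rel E := fun u v =>
  if K j then pair_match (xa D j) (xd D j) u v || pair_match (xb D j) (xc D j) u v
  else pair_match (xa D j) (xb D j) u v || pair_match (xc D j) (xd D j) u v.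

Lemma smooth_at_sym K j : symmetric (smooth_at K j).
Proof. by move=> u v; rewrite /smooth_at; case: (K j); rewrite !(pair_match_sym _ _ u). Qed.

Lemma smooth_rel_sym K : symmetric (sr K).
Proof. by move=> u v; apply: eq_existsb => j; apply: smooth_at_sym. Qed.

Lemma connect_smooth_sym K u v : connect (sr K) u v = connect (sr K) v u.
Proof. by rewrite (sym_connect_sym (smooth_rel_sym K)). Qed.

Lemma smooth_rel_at K i u v : smooth_at K i u v -> sr K u v.
Proof. by move=> h; apply/existsP; exists i. Qed.

Lemma flip_at K i : flip K i i = ~~ K i.
Proof. by rewrite ffunE eqxx. Qed.

Lemma flip_off K i j : j != i -> flip K i j = K j.
Proof. by move=> ji; rewrite ffunE (negbTE ji). Qed.

Lemma flipK K i : flip (flip K i) i = K.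
Proof. by apply/ffunP=> j; rewrite !ffunE eqxx; case: eqP => [->|//]; rewrite negbK. Qed.

Definition slots i : seq E := [:: xa D i; xb D i; xc D i; xd D i].

Lemma smooth_rel_flip K i u v :
  sr K u v -> sr (flip K i) u v || (u \in slots i) && (v \in slots i).
Proof.
case/existsP=> j; have [->{j}|ji] := eqVneq j i => hj; last first.
  by apply/orP; left; apply/existsP; exists j; rewrite flip_off.
apply/orP; right; move: hj; rewrite /pair_match.
by case: (K i) => /orP[] /orP[] /andP[/eqP-> /eqP->]; rewrite !inE !eqxx ?orbT.
Qed.

Lemma reps_fst K i : (reps D K i).1 = xa D i.
Proof. by rewrite /reps; case: (K i). Qed.

Lemma reps_flip_fst K i : (reps D (flip K i) i).1 = (reps D K i).1.
Proof. by rewrite !reps_fst. Qed.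

Lemma reps_snd_slots K i : (reps D K i).2 \in slots i.
Proof. by rewrite /reps; case: (K i); rewrite !inE eqxx ?orbT. Qed.

Definition off_rel K i : rel E := fun u v => [exists j, (j != i) && smooth_at K j u v].

Lemma off_rel_sym K i : symmetric (off_rel K i).
Proof. by move=> u v; apply: eq_existsb => j; rewrite smooth_at_sym. Qed.

Lemma off_rel_flip K i : off_rel (flip K i) i =2 off_rel K i.
Proof.
move=> u v; apply: eq_existsb => j.
by have [->|ji] := eqVneq j i; rewrite ?eqxx //= /smooth_at flip_off.
Qed.

Lemma connect_off_smooth K i u v : connect (off_rel K i) u v -> connect (sr K) u v.
Proof.
apply: connect_sub => x y /existsP[j /andP[_ h]].
by apply: connect1; apply/existsP; exists j.
Qed.

Lemma connect_off_flip K i u v : connect (off_rel K i) u v -> connect (sr (flip K i)) u v.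
Proof. by rewrite -(eq_connect (off_rel_flip K i)); apply: connect_off_smooth. Qed.

Lemma closedP I S :
  reflect (forall e f, connect (sr I) e f -> (e \in S) = (f \in S)) (closedb D I S).
Proof.
apply: (iffP forallP) => [h e f c | h e].
  by have /forallP/(_ f)/implyP/(_ c)/eqP := h e.
by apply/forallP=> f; apply/implyP=> c; apply/eqP; exact: h.
Qed.

Lemma closed_mem I S e f : closedb D I S -> connect (sr I) e f -> (e \in S) = (f \in S).
Proof. by move=> /closedP; apply. Qed.

Lemma closed_forward I S :
  (forall e f, connect (sr I) e f -> e \in S -> f \in S) -> closedb D I S.
Proof.
move=> h; apply/closedP => e f c; apply/idP/idP; first exact: h.
by apply: h; rewrite connect_smooth_sym.
Qed.

Lemma closed_weaken I I' S :
  (forall u v, connect (sr I) u v -> connect (sr I') u v) ->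
  closedb D I' S -> closedb D I S.
Proof. by move=> sub /closedP h; apply/closedP => e f /sub; apply: h. Qed.

Lemma closed_circ I x : closedb D I (circ D I x).
Proof. by apply: closed_forward => e f c; rewrite !inE => h; apply: connect_trans h c. Qed.

Lemma closedU I S S' : closedb D I S -> closedb D I S' -> closedb D I (S :|: S').
Proof.
by move=> /closedP h /closedP h'; apply/closedP => e f c; rewrite !inE (h _ _ c) (h' _ _ c).
Qed.

Lemma circ_eq I x y : connect (sr I) x y -> circ D I x = circ D I y.
Proof.
move=> c; apply/setP => z; rewrite !inE; apply/idP/idP; last exact: connect_trans.
by apply: connect_trans; rewrite connect_smooth_sym.
Qed.

Lemma closed_closure I S : closedb D I (Defs.closure D I S).
Proof.
apply: closed_forward => e f c; rewrite !inE => /existsP[g /andP[gS ge]].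
by apply/existsP; exists g; rewrite gS (connect_trans ge c).
Qed.

Lemma mem_closure I S x : x \in S -> x \in Defs.closure D I S.
Proof. by move=> xS; rewrite inE; apply/existsP; exists x; rewrite xS connect0. Qed.

Lemma closureU I S S' :
  Defs.closure D I (S :|: S') = Defs.closure D I S :|: Defs.closure D I S'.
Proof.
apply/setP => x; rewrite !inE; apply/existsP/orP => [[f]|[]/existsP[f]].
- by rewrite inE => /andP[/orP[fS|fS] fx]; [left|right]; apply/existsP; exists f; rewrite fS.
- by case/andP=> fS fx; exists f; rewrite inE fS.
- by case/andP=> fS fx; exists f; rewrite inE fS orbT.
Qed.

Lemma closure_circ I I' x :
  (forall u v, connect (sr I') u v -> connect (sr I) u v) ->
  Defs.closure D I (circ D I' x) = circ D I x.
Proof.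
move=> sub; apply/setP => y; rewrite !inE; apply/existsP/idP => [[f]|xy].
  by rewrite inE => /andP[/sub xf fy]; apply: connect_trans xf fy.
by exists x; rewrite inE connect0.
Qed.

End Smoothings.

Section Topology.
Variables (E : finType) (n : nat) (D : pd E n).
Hypothesis wfD : pd_wf D.
Implicit Types (K : state n) (i j : 'I_n) (u v e p : E) (S : {set E}).
Local Notation sr := (smooth_rel D).

Definition slot_count j e : nat :=
  ((xa D j == e) + (xb D j == e) + (xc D j == e) + (xd D j == e))%N.

Lemma slot_count_even e : 2 %| \sum_j slot_count j e.
Proof.
have [inout _] := wfD e.
have -> : (\sum_j slot_count j e = in_count D e + out_count D e)%N.
  rewrite /in_count /out_count -big_split; apply: eq_bigr => j _.
  by rewrite /slot_count /over_in /over_out; case: (ovdir D j) => /=; lia.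
by rewrite inout addnn -mul2n dvdn_mulr.
Qed.

Lemma sum_eq_in (A : {set E}) u : (\sum_(e in A) (u == e) = (u \in A))%N.
Proof.
rewrite big_mkcond (bigD1 u) //= eqxx big1 => [|e /negbTE ne]; first by case: (u \in A).
by rewrite eq_sym ne; case: (e \in A).
Qed.

(* Each crossing other than i pairs its four slots by its smoothing, so it
   meets a union of components of [off_rel K i] an even number of times. *)
Lemma off_slot_count_even K i (A : {set E}) :
  (forall u v, off_rel D K i u v -> (u \in A) = (v \in A)) ->
  2 %| \sum_(e in A) \sum_(j | j != i) slot_count j e.
Proof.
move=> closedA; rewrite exchange_big /=; apply: dvdn_sum => j ji.
rewrite /slot_count !big_split /= !sum_eq_in.
have pairs x y : pair_match x y x y by rewrite /pair_match !eqxx.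
have same x y : smooth_at D K j x y -> (x \in A) = (y \in A).
  by move=> h; apply: closedA; apply/existsP; exists j; rewrite ji.
rewrite /smooth_at in same; case: (K j) same => same.
  rewrite (same (xa D j) (xd D j)) ?pairs // (same (xb D j) (xc D j)) ?pairs ?orbT //.
  by case: (xd D j \in A); case: (xc D j \in A).
rewrite (same (xa D j) (xb D j)) ?pairs // (same (xc D j) (xd D j)) ?pairs ?orbT //.
by case: (xb D j \in A); case: (xd D j \in A).
Qed.

(* Handshake argument: otherwise the component of [xa i] would meet the
   slots an odd number of times. *)
Lemma xa_off_linked K i :
  [|| connect (off_rel D K i) (xa D i) (xb D i),
      connect (off_rel D K i) (xa D i) (xc D i)
    | connect (off_rel D K i) (xa D i) (xd D i)].
Proof.
set a := xa D i; set b := xb D i; set c := xc D i; set d := xd D i.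
have [<-|nab] := eqVneq a b; first by rewrite connect0.
have [<-|nac] := eqVneq a c; first by rewrite connect0 orbT.
have [<-|nad] := eqVneq a d; first by rewrite connect0 !orbT.
apply/negPn/negP; rewrite !negb_or => /and3P[nb nc nd].
pose A := [set e | connect (off_rel D K i) a e].
pose deg e := (\sum_(j | j != i) slot_count j e)%N.
have countE e : (\sum_j slot_count j e = slot_count i e + deg e)%N by rewrite (bigD1 i).
have closedA u v : off_rel D K i u v -> (u \in A) = (v \in A).
  move=> h; rewrite !inE; apply/idP/idP => h2; apply: connect_trans h2 (connect1 _) => //.
  by rewrite off_rel_sym.
have aA : a \in A by rewrite inE connect0.
have degA : 2 %| \sum_(e in A | e != a) deg e.
  apply: dvdn_sum => e /andP[eA nea].
  have slot0 : slot_count i e = 0%N.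
    have ne x : ~~ connect (off_rel D K i) a x -> (x == e) = false.
      by move=> nx; apply: contraNF nx => /eqP->; rewrite inE in eA.
    by rewrite /slot_count -/a -/b -/c -/d eq_sym (negbTE nea) !ne.
  by have := slot_count_even e; rewrite countE slot0.
have := off_slot_count_even closedA; rewrite (bigD1 a) //= (dvdn_addl _ degA) => dega.
have := slot_count_even a; rewrite countE (dvdn_addl _ dega) /slot_count -/a -/b -/c -/d.
by rewrite eqxx !(eq_sym _ a) (negbTE nab) (negbTE nac) (negbTE nad).
Qed.

Definition saddle_circles K i : {set E} :=
  circ D K (reps D K i).1 :|: circ D K (reps D K i).2.

Lemma saddle_circles_closed K i : closedb D K (saddle_circles K i).
Proof. exact/closedU/closed_circ/closed_circ. Qed.

Ltac smooth_step Ki :=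
  apply: connect1;
  match type of Ki with ?K ?j = _ => apply: (@smooth_rel_at _ _ D _ j) end;
  rewrite /smooth_at ?flip_at Ki /pair_match !eqxx ?orbT.

Lemma slots_saddle_circles K i u : u \in slots D i -> u \in saddle_circles K i.
Proof.
rewrite /saddle_circles /reps !inE; case Ki: (K i) => /= /or4P[]/eqP->;
  rewrite ?connect0 ?orbT //; apply/orP; first [by left; smooth_step Ki | by right; smooth_step Ki].
Qed.

Lemma flip_connect K i u v : connect (sr (flip K i)) u v ->
  connect (sr K) u v || (u \in saddle_circles K i) && (v \in saddle_circles K i).
Proof.
have closedSC := saddle_circles_closed K i.
pose P y := connect (sr K) u y || (u \in saddle_circles K i) && (y \in saddle_circles K i).
apply: (@connect_invariant _ _ P) => [x y Px|]; last by rewrite /P connect0.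
move/(smooth_rel_flip i); rewrite flipK /P => /orP[xy|/andP[xs ys]].
  case/orP: Px => [ux|/andP[-> xS]]; first by rewrite (connect_trans ux (connect1 xy)).
  by rewrite -(closed_mem closedSC (connect1 xy)) xS orbT.
apply/orP; right; rewrite (slots_saddle_circles K ys) andbT.
by case/orP: Px => [ux|/andP[//]]; rewrite (closed_mem closedSC ux) (slots_saddle_circles K xs).
Qed.

Section Merge.
Variables (K : state n) (i : 'I_n).
Local Notation J := (flip K i).
Local Notation s1 := (reps D K i).1.
Local Notation s2 := (reps D K i).2.
Hypothesis separate : ~~ connect (sr K) s1 s2.

Lemma merge_slots_connect u : u \in slots D i -> connect (sr J) (xa D i) u.
Proof.
move: separate (xa_off_linked K i); rewrite /reps /slots.
case Ki: (K i) => /= sep linked.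
  have cb : connect (sr K) (xc D i) (xb D i) by smooth_step Ki.
  have ad : connect (sr J) (xa D i) (xd D i).
    case/or3P: linked => h; first by case/negP: sep; exact: connect_off_smooth h.
      by case/negP: sep; apply: connect_trans (connect_off_smooth h) cb.
    exact: connect_off_flip h.
  rewrite !inE => /or4P[]/eqP->; rewrite ?connect0 //; try by smooth_step Ki.
  by apply: connect_trans ad _; smooth_step Ki.
have dc : connect (sr K) (xd D i) (xc D i) by smooth_step Ki.
have ab : connect (sr J) (xa D i) (xb D i).
  case/or3P: linked => h; first exact: connect_off_flip h.
    by case/negP: sep; exact: connect_off_smooth h.
  by case/negP: sep; apply: connect_trans (connect_off_smooth h) dc.
rewrite !inE => /or4P[]/eqP->; rewrite ?connect0 //; try by smooth_step Ki.
by apply: connect_trans ab _; smooth_step Ki.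
Qed.

Lemma merge_connect u v : connect (sr K) u v -> connect (sr J) u v.
Proof.
apply: connect_sub => x y /(smooth_rel_flip i)/orP[xy|/andP[xs ys]]; first exact: connect1.
apply: connect_trans (merge_slots_connect ys).
by rewrite connect_smooth_sym; apply: merge_slots_connect.
Qed.

Lemma merge_reps_connect : connect (sr J) s1 s2.
Proof.
by rewrite [s1]reps_fst; apply/merge_slots_connect/reps_snd_slots.
Qed.

Lemma merged_circle : circ D J s1 = saddle_circles K i.
Proof.
apply/setP => x; rewrite inE; apply/idP/idP.
  by case/flip_connect/orP => [h|/andP[_ //]]; rewrite /saddle_circles !inE h.
rewrite /saddle_circles !inE => /orP[]/merge_connect // h.
exact: connect_trans merge_reps_connect h.
Qed.

Lemma merge_circ_off p : p \notin saddle_circles K i -> circ D J p = circ D K p.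
Proof.
move=> pSC; apply/setP => y; rewrite !inE; apply/idP/idP => [|/merge_connect //].
by case/flip_connect/orP => [//|/andP[pSC' _]]; rewrite pSC' in pSC.
Qed.

Lemma merge_mem_closure S p : closedb D K S -> p \notin S ->
  (p \in Defs.closure D J S) = (p \in saddle_circles K i) && ((s1 \in S) || (s2 \in S)).
Proof.
move=> hS pS; apply/idP/idP.
  rewrite inE => /existsP[f /andP[fS /flip_connect/orP[fp|/andP[fSC ->]]]].
    by rewrite -(closed_mem hS fp) fS in pS.
  by move: fSC; rewrite /saddle_circles !inE => /orP[]/(closed_mem hS)->; rewrite fS ?orbT.
rewrite -merged_circle inE => /andP[s1p sS]; rewrite inE; apply/existsP.
case/orP: sS => sS; [exists s1 | exists s2]; rewrite sS //=.
by apply: connect_trans s1p; rewrite connect_smooth_sym merge_reps_connect.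
Qed.

(* m(x_p x^S) = 0 iff m(x^S) = 0 or x_p m(x^S) = 0. *)
Lemma merge_saddle_cond S p : closedb D K S -> p \notin S ->
  (s1 \in S :|: circ D K p) && (s2 \in S :|: circ D K p) =
  (s1 \in S) && (s2 \in S) || (p \in Defs.closure D J S).
Proof.
move=> hS pS; rewrite merge_mem_closure // /saddle_circles !inE.
rewrite (connect_smooth_sym D K s1 p) (connect_smooth_sym D K s2 p).
have outS e : connect (sr K) p e ==> (e \notin S).
  by apply/implyP => pe; rewrite -(closed_mem hS pe).
have apart : ~~ (connect (sr K) p s1 && connect (sr K) p s2).
  apply: contra separate => /andP[p1 p2]; apply: connect_trans p2.
  by rewrite connect_smooth_sym.
move: apart (outS s1) (outS s2).
by case: (s1 \in S); case: (s2 \in S); case: (connect _ p s1); case: (connect _ p s2).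
Qed.

End Merge.

Section Split.
Variables (K : state n) (i : 'I_n).
Local Notation J := (flip K i).
Local Notation s1 := (reps D K i).1.
Local Notation t2 := (reps D J i).2.
Hypothesis split : ~~ connect (sr J) s1 t2.

Let separateJ : ~~ connect (sr J) (reps D J i).1 t2.
Proof. by rewrite reps_flip_fst. Qed.

Lemma split_connect u v : connect (sr J) u v -> connect (sr K) u v.
Proof. by rewrite -{2}[K](flipK K i); apply: merge_connect. Qed.

Let split_saddle_circles : saddle_circles J i = circ D K s1.
Proof. by rewrite -(merged_circle separateJ) flipK reps_flip_fst. Qed.

Lemma split_circle : circ D K s1 = circ D J s1 :|: circ D J t2.
Proof. by rewrite -split_saddle_circles /saddle_circles reps_flip_fst. Qed.

Lemma split_circ_off q : q \notin circ D K s1 -> circ D K q = circ D J q.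
Proof. by rewrite -split_saddle_circles => /(merge_circ_off separateJ); rewrite flipK. Qed.

Lemma split_halves q : connect (sr K) q s1 ->
  connect (sr J) t2 q = ~~ connect (sr J) s1 q.
Proof.
move=> qs1; have : q \in circ D K s1 by rewrite inE connect_smooth_sym.
rewrite split_circle !inE; case: (boolP (connect _ s1 q)) => //= s1q _.
apply/negbTE; apply: contra split => t2q; apply: connect_trans s1q _.
by rewrite connect_smooth_sym.
Qed.

End Split.
End Topology.

Section Linear.
Local Open Scope ring_scope.
Variables (E : finType) (n : nat) (D : pd E n) (F : fieldType).
Implicit Types (f g : state n -> {set E} -> C D F) (u v : C D F).

Lemma linextD f u v : linext f (u + v) = linext f u + linext f v.
Proof.
apply/ffunP => h; rewrite !ffunE -big_split /=; apply: eq_bigr => x _.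
by rewrite ffunE mulrDl.
Qed.

Lemma linext0 f : linext f 0 = 0.
Proof. by apply/ffunP => h; rewrite !ffunE big1 // => x _; rewrite ffunE mul0r. Qed.

Lemma linext_sum f (I : finType) (P : pred I) (u : I -> C D F) :
  linext f (\sum_(k | P k) u k) = \sum_(k | P k) linext f (u k).
Proof.
apply/ffunP => h; rewrite ffunE !sum_ffunE.
under eq_bigr do rewrite sum_ffunE mulr_suml.
by rewrite exchange_big /=; apply: eq_bigr => k _; rewrite ffunE.
Qed.

Lemma linext_scale f (c : F) u :
  linext f [ffun h => c * u h] = [ffun h => c * linext f u h].
Proof.
by apply/ffunP => h; rewrite !ffunE mulr_sumr; apply: eq_bigr => x _; rewrite ffunE mulrA.
Qed.

Lemma linext_comp f g v :
  linext g (linext f v) = linext (fun I S => linext g (f I S)) v.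
Proof.
apply/ffunP => h; rewrite !ffunE.
under eq_bigr do rewrite ffunE mulr_suml.
rewrite exchange_big /=; apply: eq_bigr => x _; rewrite ffunE mulr_sumr.
by apply: eq_bigr => y _; rewrite mulrA.
Qed.

Lemma eq_linext f g v :
  (forall x : gen D, f (val x).1 (val x).2 = g (val x).1 (val x).2) ->
  linext f v = linext g v.
Proof. by move=> fg; apply/ffunP => h; rewrite !ffunE; apply: eq_bigr => x _; rewrite fg. Qed.

Lemma linext_bvec f I S :
  linext f (bvec D F I S) = if closedb D I S then f I S else 0.
Proof.
apply/ffunP => h; rewrite ffunE; case: ifP => cl.
  rewrite (bigD1 (exist _ (I, S) cl)) //= big1 => [|x nx].
    by rewrite ffunE eqxx mul1r addr0.
  rewrite ffunE; case: eqP => [e|]; last by rewrite mul0r.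
  by case/negP: nx; apply/eqP/val_inj.
rewrite ffunE big1 // => x _; rewrite ffunE; case: eqP => [e|]; last by rewrite mul0r.
by case: x e => [[I0 S0] c] /= [eI eS]; move: c; rewrite /= eI eS cl.
Qed.

Lemma XpD p u v : Xp p (u + v) = Xp p u + Xp p v.
Proof. exact: linextD. Qed.

Lemma Xp0 p : Xp p (0 : C D F) = 0.
Proof. exact: linext0. Qed.

Lemma Xp_sum p (I : finType) (P : pred I) (u : I -> C D F) :
  Xp p (\sum_(k | P k) u k) = \sum_(k | P k) Xp p (u k).
Proof. exact: linext_sum. Qed.

Lemma Xp_scale p (c : F) u : Xp p [ffun h => c * u h] = [ffun h => c * Xp p u h].
Proof. exact: linext_scale. Qed.

Lemma Xp_bvec p I S : Xp p (bvec D F I S) =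
  if closedb D I S then (if p \in S then 0 else bvec D F I (S :|: circ D I p)) else 0.
Proof. exact: linext_bvec. Qed.

Lemma linext_Xp p f v :
  (forall I S, closedb D I S ->
     Xp p (f I S) = if p \in S then 0 else f I (S :|: circ D I p)) ->
  linext f (Xp p v) = Xp p (linext f v).
Proof.
move=> fXp; rewrite /Xp !linext_comp; apply: eq_linext => -[[I S] hS] /=.
rewrite -/(Xp p (f I S)) fXp //; case: (p \in S); first exact: linext0.
by rewrite linext_bvec closedU // closed_circ.
Qed.

End Linear.

Section SaddleCommutes.
Local Open Scope ring_scope.
Variables (E : finType) (n : nat) (D : pd E n) (F : fieldType).
Hypothesis wfD : pd_wf D.
Variables (K : state n) (i : 'I_n).
Implicit Types (S : {set E}) (p : E).
Local Notation sr := (smooth_rel D).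
Local Notation J := (flip K i).
Local Notation s1 := (reps D K i).1.
Local Notation s2 := (reps D K i).2.
Local Notation t2 := (reps D J i).2.

Section MergeCase.
Hypothesis separate : ~~ connect (sr K) s1 s2.

Lemma saddle_mergeE S : saddle D F K J i S =
  if (s1 \in S) && (s2 \in S) then 0 else bvec D F J (Defs.closure D J S).
Proof. by rewrite /saddle /= separate. Qed.

Lemma Xp_saddle_merge S p : closedb D K S ->
  Xp p (saddle D F K J i S) = if p \in S then 0 else saddle D F K J i (S :|: circ D K p).
Proof.
move=> hS; rewrite !saddle_mergeE.
have [pS|pS] := boolP (p \in S).
  by case: ifP => _; rewrite ?Xp0 // Xp_bvec closed_closure mem_closure.
rewrite merge_saddle_cond //; case: ((s1 \in S) && (s2 \in S)) => /=; first exact: Xp0.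
rewrite Xp_bvec closed_closure closureU (closure_circ _ (merge_connect wfD separate)).
by case: (p \in _).
Qed.

End MergeCase.

Section SplitCase.
Hypotheses (joined : connect (sr K) s1 s2) (split : ~~ connect (sr J) s1 t2).

Lemma saddle_splitE S : saddle D F K J i S =
  if s1 \in S then bvec D F J S
  else bvec D F J (S :|: circ D J s1) + bvec D F J (S :|: circ D J t2).
Proof. by rewrite /saddle /= joined reps_flip_fst split. Qed.

Lemma Xp_saddle_split S p : closedb D K S ->
  Xp p (saddle D F K J i S) = if p \in S then 0 else saddle D F K J i (S :|: circ D K p).
Proof.
move=> hS; have hSJ : closedb D J S := closed_weaken (split_connect wfD split) hS.
have XpJ T : closedb D J T ->
    Xp p (bvec D F J T) = if p \in T then 0 else bvec D F J (T :|: circ D J p).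
  by move=> hT; rewrite Xp_bvec hT.
have hSC q : closedb D J (S :|: circ D J q) := closedU hSJ (closed_circ _ _ _).
rewrite !saddle_splitE.
have [pS|pS] := boolP (p \in S).
  by case: ifP => _; rewrite ?XpD !XpJ // ?inE pS ?addr0.
have [s1S|s1S] := boolP (s1 \in S).
  rewrite XpJ // (negbTE pS) inE s1S (split_circ_off wfD split) //.
  by apply: contraNN pS; rewrite inE => /(closed_mem hS) <-.
rewrite XpD !XpJ // !inE (negbTE pS) /= (negbTE s1S) /=.
have [ps1|ps1] := boolP (connect (sr K) p s1); last first.
  have : p \notin circ D K s1 by rewrite inE connect_smooth_sym.
  rewrite [in X in X -> _](split_circle wfD split) !inE negb_or.
  case/andP=> /negbTE-> /negbTE->; rewrite (split_circ_off wfD split) ?inE 1?connect_smooth_sym //.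
  by rewrite !(setUAC S (circ D J p)).
rewrite (circ_eq ps1) (split_circle wfD split) (split_halves wfD split ps1).
case s1p: (connect (sr J) s1 p) => /=.
  by rewrite add0r -(circ_eq s1p) -setUA [circ D J t2 :|: _]setUC.
have t2p : connect (sr J) t2 p by rewrite (split_halves wfD split ps1) s1p.
by rewrite addr0 -(circ_eq t2p) setUA.
Qed.
End SplitCase.

Lemma Xp_saddle S p : closedb D K S ->
  Xp p (saddle D F K J i S) = if p \in S then 0 else saddle D F K J i (S :|: circ D K p).
Proof.
have [joined|separate] := boolP (connect (sr K) s1 s2); last exact: Xp_saddle_merge.
have [fused|split] := boolP (connect (sr J) s1 t2); last exact: Xp_saddle_split.
by move=> _; rewrite /saddle /= joined reps_flip_fst fused /= Xp0; case: ifP.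
Qed.

End SaddleCommutes.

Unset Implicit Arguments.
Local Open Scope ring_scope.

Theorem proposition6p3 (F : fieldType) (hF : 2%N \in [pchar F])
  (E : finType) (n : nat) (D : pd E n) (hD : pd_wf D)
  (w : E -> F) (hw : forall e f, connect (link_rel D) e f -> w e = w f)
  (sgn : 'I_n -> bool) (p : E) :
  forall v : C D F, dd sgn w (Xp p v) = Xp p (dd sgn w v).
Proof.
move=> v; rewrite /dd XpD; congr (_ + _); apply: linext_Xp => I S hS; rewrite Xp_sum.
  under eq_bigr => k _ do rewrite (Xp_saddle F hD k p hS).
  by case: (p \in S); rewrite ?big1_eq.
under eq_bigr => k _ do
  rewrite (Xp_scale p _ (saddle D F I (flip I k) k S)) (Xp_saddle F hD k p hS).
by case: (p \in S); rewrite // big1 // => k _; apply/ffunP => h; rewrite !ffunE mulr0.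
Qed.
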